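(* Let $\mathcal C$ be a parsummable category, let $m,n\ge0$, $X_\bullet=(X_1,\dots,X_m)\in\mathcal C^{\times m}$, $Y_\bullet=(Y_1,\dots,Y_n)\in\mathcal C^{\times n}$, and let $\phi\colon\mathbf m\times\omega\to\omega$ and $\psi\colon\mathbf n\times\omega\to\omega$ be arbitrary injections. Then the map $\mathrm{Hom}_{\mathcal C}(\phi_*(X_\bullet),\psi_*(Y_\bullet))\to\Sigma_{\mathcal C}(X_\bullet,Y_\bullet)$, $f\mapsto[\psi,f,\phi]$, is bijective.
   Context: Let $\omega=\{1,2,\dots\}$, $\mathbf m=\{1,\dots,m\}$, and $\mathcal M$ the monoid of injections $\omega\to\omega$; $E\mathcal M$ is the category with objects $\mathcal M$ and a unique morphism between any two objects (a strict monoidal category). An $E\mathcal M$-category is a small category with a strict $E\mathcal M$-action; $u_*$ denotes the action of $u\in\mathcal M$ and $[v,u]\colon u_*\Rightarrow v_*$ the natural isomorphism from the morphism $u\to v$. An object $X$ is supported on finite $A\subset\omega$ if $u_*X=X$ whenever $u$ fixes $A$ pointwise; $\mathrm{supp}(X)$ is the intersection of the finite sets supporting $X$; tame means all objects are finitely supported. A parsummable category is a tame $E\mathcal M$-category $\mathcal C$ with an object $0$ of empty support and a functor $+$ defined on the full subcategory of $\mathcal C\times\mathcal C$ of disjointly supported pairs, strictly unital, associative, commutative and $E\mathcal M$-equivariant ($u_*(X+Y)=u_*X+u_*Y$ and $[u,1]_{X+Y}=[u,1]_X+[u,1]_Y$). For an injection $\phi\colon\mathbf m\times\omega\to\omega$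 put $\phi_*(X_\bullet)=\sum_{i=1}^m\phi(i,-)_*(X_i)$, and for another injection $\phi'$ put $[\phi',\phi]_{X_\bullet}=\sum_{i}[\phi'(i,-),\phi(i,-)]_{X_i}\colon\phi_*(X_\bullet)\to\phi'_*(X_\bullet)$. Define $\Sigma_{\mathcal C}(X_\bullet,Y_\bullet)$ as the set of triples $(\psi,f,\phi)$, with $\phi\colon\mathbf m\times\omega\to\omega$ and $\psi\colon\mathbf n\times\omega\to\omega$ injections and $f\colon\phi_*(X_\bullet)\to\psi_*(Y_\bullet)$ a morphism in $\mathcal C$, modulo the equivalence relation $(\psi,f,\phi)\sim(\psi',f',\phi')$ iff $f'=[\psi',\psi]\circ f\circ[\phi,\phi']$; $[\psi,f,\phi]$ denotes the class. *)

From mathcomp Require Import all_boot.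
Set Implicit Arguments. Unset Strict Implicit. Unset Printing Implicit Defensive.

(* Convention: omega = {1,2,...} is modelled by nat (a bijective relabelling);
   an injection omega -> omega is a function u : nat -> nat with [injective u].
   A small category is encoded single-sorted: a type of objects, a type of
   morphisms with domain/codomain, identities and a (total) composition whose
   axioms are imposed only on composable pairs. *)

Definition supported_on (Ob : Type) (act : (nat -> nat) -> Ob -> Ob)
  (X : Ob) (A : seq nat) : Prop :=
  forall u : nat -> nat, injective u -> (forall a, a \in A -> u a = a) -> act u X = X.

Definition in_supp (Ob : Type) (act : (nat -> nat) -> Ob -> Ob) (X : Ob) (a : nat) : Prop :=
  forall A : seq nat, supported_on act X A -> a \in A.

Definition disj_supp (Ob : Type) (act : (nat -> nat) -> Ob -> Ob) (X Y : Ob) : Prop :=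
  forall a, ~ (in_supp act X a /\ in_supp act Y a).

Record parsummable := Parsummable {
  Ob : Type;
  Mor : Type;
  dom : Mor -> Ob;
  cod : Mor -> Ob;
  idm : Ob -> Mor;
  comp : Mor -> Mor -> Mor;            (* comp g f = g o f *)
  dom_idm : forall X, dom (idm X) = X;
  cod_idm : forall X, cod (idm X) = X;
  dom_comp : forall g f, cod f = dom g -> dom (comp g f) = dom f;
  cod_comp : forall g f, cod f = dom g -> cod (comp g f) = cod g;
  comp_idr : forall f, comp f (idm (dom f)) = f;
  comp_idl : forall f, comp (idm (cod f)) f = f;
  compA : forall h g f, cod f = dom g -> cod g = dom h ->
    comp h (comp g f) = comp (comp h g) f;
  (* strict EM-action: u_* on objects and morphisms, [v,u]_X : u_*X -> v_*X *)
  act : (nat -> nat) -> Ob -> Ob;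
  actm : (nat -> nat) -> Mor -> Mor;
  br : (nat -> nat) -> (nat -> nat) -> Ob -> Mor;
  dom_actm : forall u f, injective u -> dom (actm u f) = act u (dom f);
  cod_actm : forall u f, injective u -> cod (actm u f) = act u (cod f);
  actm_idm : forall u X, injective u -> actm u (idm X) = idm (act u X);
  actm_comp : forall u g f, injective u -> cod f = dom g ->
    actm u (comp g f) = comp (actm u g) (actm u f);
  dom_br : forall v u X, injective u -> injective v -> dom (br v u X) = act u X;
  cod_br : forall v u X, injective u -> injective v -> cod (br v u X) = act v X;
  br_nat : forall v u f, injective u -> injective v ->
    comp (actm v f) (br v u (dom f)) = comp (br v u (cod f)) (actm u f);
  br_id : forall u X, injective u -> br u u X = idm (act u X);
  br_comp : forall w v u X, injective u -> injective v -> injective w ->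
    comp (br w v X) (br v u X) = br w u X;
  act_id : forall X, act id X = X;
  actm_id : forall f, actm id f = f;
  act_comp : forall u v X, injective u -> injective v ->
    act (u \o v) X = act u (act v X);
  actm_comp_fun : forall u v f, injective u -> injective v ->
    actm (u \o v) f = actm u (actm v f);
  br_comp_fun : forall u u' v v' X,
    injective u -> injective u' -> injective v -> injective v' ->
    br (u' \o v') (u \o v) X = comp (br u' u (act v' X)) (actm u (br v' v X));
  tame : forall X, exists A : seq nat, supported_on act X A;
  zero : Ob;
  supp_zero : forall a, ~ in_supp act zero a;
  plus : Ob -> Ob -> Ob;
  plusm : Mor -> Mor -> Mor;
  dom_plusm : forall f g, disj_supp act (dom f) (dom g) -> disj_supp act (cod f) (cod g) ->
    dom (plusm f g) = plus (dom f) (dom g);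
  cod_plusm : forall f g, disj_supp act (dom f) (dom g) -> disj_supp act (cod f) (cod g) ->
    cod (plusm f g) = plus (cod f) (cod g);
  plusm_idm : forall X Y, disj_supp act X Y -> plusm (idm X) (idm Y) = idm (plus X Y);
  plusm_comp : forall f g f' g', cod f = dom f' -> cod g = dom g' ->
    disj_supp act (dom f) (dom g) -> disj_supp act (cod f) (cod g) ->
    disj_supp act (cod f') (cod g') ->
    plusm (comp f' f) (comp g' g) = comp (plusm f' g') (plusm f g);
  plus0r : forall X, plus X zero = X;
  plus0l : forall X, plus zero X = X;
  plusm0r : forall f, plusm f (idm zero) = f;
  plusm0l : forall f, plusm (idm zero) f = f;
  plusA : forall X Y Z, disj_supp act X Y -> disj_supp act X Z -> disj_supp act Y Z ->
    plus (plus X Y) Z = plus X (plus Y Z);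
  plusmA : forall f g h,
    disj_supp act (dom f) (dom g) -> disj_supp act (dom f) (dom h) -> disj_supp act (dom g) (dom h) ->
    disj_supp act (cod f) (cod g) -> disj_supp act (cod f) (cod h) -> disj_supp act (cod g) (cod h) ->
    plusm (plusm f g) h = plusm f (plusm g h);
  plusC : forall X Y, disj_supp act X Y -> plus X Y = plus Y X;
  plusmC : forall f g, disj_supp act (dom f) (dom g) -> disj_supp act (cod f) (cod g) ->
    plusm f g = plusm g f;
  act_plus : forall u X Y, injective u -> disj_supp act X Y ->
    act u (plus X Y) = plus (act u X) (act u Y);
  actm_plusm : forall u f g, injective u ->
    disj_supp act (dom f) (dom g) -> disj_supp act (cod f) (cod g) ->
    actm u (plusm f g) = plusm (actm u f) (actm u g);
  br_plus : forall u X Y, injective u -> disj_supp act X Y ->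
    br u id (plus X Y) = plusm (br u id X) (br u id Y)
}.

Section Sigma.
Variable C : parsummable.

(* injections phi : m x omega -> omega, curried *)
Definition inj2 (m : nat) (phi : 'I_m -> nat -> nat) : Prop :=
  forall i i' j j', phi i j = phi i' j' -> i = i' /\ j = j'.

Definition pstar (m : nat) (phi : 'I_m -> nat -> nat) (X : 'I_m -> Ob C) : Ob C :=
  \big[@plus C / zero C]_(i < m) @act C (phi i) (X i).

Definition pbr (m : nat) (phi' phi : 'I_m -> nat -> nat) (X : 'I_m -> Ob C) : Mor C :=
  \big[@plusm C / idm (zero C)]_(i < m) @br C (phi' i) (phi i) (X i).

Definition Hom (A B : Ob C) := { f : Mor C | dom f = A /\ cod f = B }.

Record triple (m n : nat) (X : 'I_m -> Ob C) (Y : 'I_n -> Ob C) := Triple {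
  tphi : 'I_m -> nat -> nat;
  tphi_inj : inj2 tphi;
  tpsi : 'I_n -> nat -> nat;
  tpsi_inj : inj2 tpsi;
  tf : Hom (pstar tphi X) (pstar tpsi Y)
}.

Definition tsim (m n : nat) (X : 'I_m -> Ob C) (Y : 'I_n -> Ob C)
  (t t' : triple X Y) : Prop :=
  sval (tf t') = @comp C (pbr (tpsi t') (tpsi t) Y)
                        (@comp C (sval (tf t)) (pbr (tphi t) (tphi t') X)).

Definition tclass (m n : nat) (X : 'I_m -> Ob C) (Y : 'I_n -> Ob C)
  (t : triple X Y) : triple X Y -> Prop := fun s => tsim s t.

Definition Sigma (m n : nat) (X : 'I_m -> Ob C) (Y : 'I_n -> Ob C)
  (c : triple X Y -> Prop) : Prop := exists t : triple X Y, c = tclass t.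

Definition to_Sigma (m n : nat) (X : 'I_m -> Ob C) (Y : 'I_n -> Ob C)
  (phi : 'I_m -> nat -> nat) (psi : 'I_n -> nat -> nat)
  (hphi : inj2 phi) (hpsi : inj2 psi)
  (f : Hom (pstar phi X) (pstar psi Y)) : triple X Y -> Prop :=
  tclass (Triple hphi hpsi f).

End Sigma.

From Pilot Require Import Defs.
From mathcomp Require Import all_boot zify.
From Stdlib Require Import Classical FunctionalExtensionality PropExtensionality ProofIrrelevance.

(* Injectivity holds because [psi, psi] and [phi, phi] are identities; surjectivity because
   (psi', f', phi') ~ (psi, [psi, psi'] o f' o [phi', phi], phi), where ~ is an equivalence by
   the cocycle identity [w, v] o [v, u] = [w, u] of the summed brackets.

   The substance is that these sums are defined at all: the summands phi(i,-)_* X_i must have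
   disjoint supports, which follows from supp(u_* Z) being contained in the image of u.  That
   rests on u_* Z = w_* Z whenever u and w agree on a support {0, ..., N-1} of Z.  To see it,
   choose indices a_0, b_0, a_1, b_1, ... >= N with u a_0 < w b_0 < u a_1 < w b_1 < ...; the
   injection t equal to u below N and enumerating this chain above N satisfies
   u o a = t o x and w o b = t o y for injections a, b, x, y fixing {0, ..., N-1}, whence
   u_* Z = t_* Z = w_* Z. *)

Lemma inj_has_gt_iota (f : nat -> nat) L B :
  injective f -> has (fun j => B < f j) (iota L B.+2).
Proof.
move=> f_inj; apply: contraT => /hasPn small.
have sub : {subset map f (iota L B.+2) <= iota 0 B.+1}.
  by move=> y /mapP[j /small Bj ->]; rewrite mem_iota leq0n add0n ltnS leqNgt.
have := uniq_leq_size (_ : uniq (map f (iota L B.+2))) sub.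
by rewrite map_inj_uniq // iota_uniq size_map !size_iota ltnn => /(_ isT).
Qed.

Section Interleave.
Variables (u w : nat -> nat) (N : nat).
Hypotheses (u_inj : injective u) (w_inj : injective w).

Definition alternate k := if odd k then w else u.

Lemma alternate_inj k : injective (alternate k).
Proof. by rewrite /alternate; case: odd. Qed.

Lemma alternate_even k : alternate k.*2 = u.
Proof. by rewrite /alternate odd_double. Qed.

Lemma alternate_odd k : alternate k.*2.+1 = w.
Proof. by rewrite /alternate /= odd_double. Qed.

Definition index_above k B :=
  let s := iota N B.+2 in nth N s (find (fun j => B < alternate k j) s).

Lemma index_above_spec k B :
  N <= index_above k B /\ B < alternate k (index_above k B).
Proof.
have has_gt := inj_has_gt_iota (alternate k) N B (alternate_inj k).
split; last exact: (nth_find N has_gt).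
have := mem_nth N (_ : find (fun j => B < alternate k j) (iota N B.+2) < size (iota N B.+2)).
by rewrite mem_iota -has_find => /(_ has_gt) /andP[].
Qed.

Fixpoint interleave_idx k :=
  if k is k'.+1 then index_above k (alternate k' (interleave_idx k')) else index_above 0 0.

Definition interleave_val k := alternate k (interleave_idx k).

Lemma interleave_idx_ge k : N <= interleave_idx k.
Proof. by case: k => [|k]; apply: (proj1 (index_above_spec _ _)). Qed.

Lemma interleave_val_lt k : interleave_val k < interleave_val k.+1.
Proof. exact: (proj2 (index_above_spec _ _)). Qed.

Lemma interleave_val_inj : injective interleave_val.
Proof. exact: incn_inj (leq_mono (homo_ltn ltn_trans interleave_val_lt)). Qed.

Lemma interleave_idx_inj_parity k k' :
  odd k = odd k' -> interleave_idx k = interleave_idx k' -> k = k'.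
Proof.
by move=> pk e; apply: interleave_val_inj; rewrite /interleave_val /alternate pk e.
Qed.

Lemma interleave_idx_even_inj : injective (fun j => interleave_idx j.*2).
Proof.
by move=> j j' /interleave_idx_inj_parity; rewrite !odd_double => /(_ erefl)/double_inj.
Qed.

Lemma interleave_idx_odd_inj : injective (fun j => interleave_idx j.*2.+1).
Proof.
move=> j j' /interleave_idx_inj_parity.
by rewrite /= !odd_double => /(_ erefl)/succn_inj/double_inj.
Qed.

Definition id_below (g : nat -> nat) i := if i < N then i else g (i - N).

Lemma id_below_lt g i : i < N -> id_below g i = i.
Proof. by rewrite /id_below => ->. Qed.

Lemma id_below_inj g : injective g -> (forall j, N <= g j) -> injective (id_below g).
Proof.
move=> g_inj gN i j; rewrite /id_below.
case: ltnP => iN; case: ltnP => jN //.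
- by move: (gN (j - N)); lia.
- by move: (gN (i - N)); lia.
- by move/g_inj; lia.
Qed.

Hypothesis uw_agree : forall i, i < N -> u i = w i.

Definition merged i := if i < N then u i else interleave_val (i - N).

Lemma merged_inj : injective merged.
Proof.
have fresh i k : i < N -> u i <> interleave_val k.
  move=> iN; have <- : alternate k i = u i by rewrite /alternate; case: odd; rewrite ?uw_agree.
  by move/(alternate_inj k) => e; move: (interleave_idx_ge k); lia.
move=> i j; rewrite /merged.
case: ltnP => iN; case: ltnP => jN.
- exact: u_inj.
- by move/fresh.
- by move=> e; have := fresh j (i - N) jN; rewrite e.
- by move/interleave_val_inj; lia.
Qed.

Lemma merged_id_below_even :
  u \o id_below (fun j => interleave_idx j.*2) =1 merged \o id_below (fun j => N + j.*2).
Proof.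
move=> i; rewrite /= /id_below /merged; case: ltnP => iN; first by rewrite iN.
by rewrite ltnNge leq_addr addKn /interleave_val alternate_even.
Qed.

Lemma merged_id_below_odd :
  w \o id_below (fun j => interleave_idx j.*2.+1) =1 merged \o id_below (fun j => N + j.*2.+1).
Proof.
move=> i; rewrite /= /id_below /merged; case: ltnP => iN; first by rewrite iN uw_agree.
by rewrite ltnNge leq_addr addKn /interleave_val alternate_odd.
Qed.

End Interleave.

Section Support.
Context {C : parsummable}.
Local Notation act := (@act C).

Lemma supported_on_sub (Z : Ob C) A B :
  supported_on act Z A -> {subset A <= B} -> supported_on act Z B.
Proof. by move=> ZA AB v v_inj vB; apply: ZA => // a /AB /vB. Qed.

Lemma supported_on_iota (Z : Ob C) : exists N, supported_on act Z (iota 0 N).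
Proof.
have [A ZA] := tame Z; exists (\max_(a <- A) a).+1.
apply: supported_on_sub ZA _ => a aA.
by rewrite mem_iota /= ltnS (leq_bigmax_seq (F := id) a aA).
Qed.

Lemma act_id_below (Z : Ob C) N g u : supported_on act Z (iota 0 N) ->
  injective u -> injective g -> (forall j, N <= g j) ->
  act (u \o id_below N g) Z = act u Z.
Proof.
move=> ZN u_inj g_inj gN; have id_below_inj := id_below_inj N g g_inj gN.
rewrite act_comp // ZN // => a; rewrite mem_iota => /andP[_ aN].
exact: id_below_lt.
Qed.

Lemma act_agree (Z : Ob C) N u w : supported_on act Z (iota 0 N) ->
  injective u -> injective w -> (forall i, i < N -> u i = w i) ->
  act u Z = act w Z.
Proof.
move=> ZN u_inj w_inj uw_agree.
have merged_inj := merged_inj u w N u_inj w_inj uw_agree.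
have idx_ge := interleave_idx_ge u w N u_inj w_inj.
have even_inj : injective (fun j => N + j.*2) by move=> j j' /addnI/double_inj.
have odd_inj : injective (fun j => N + j.*2.+1) by move=> j j' /addnI/succn_inj/double_inj.
have N_le_add j : N <= N + j := leq_addr j N.
transitivity (act (merged u w N) Z).
  have idx_even_inj := interleave_idx_even_inj u w N u_inj w_inj.
  rewrite -(act_id_below _ _ _ _ ZN u_inj idx_even_inj (fun j => idx_ge _)).
  by rewrite (functional_extensionality _ _ (merged_id_below_even u w N)) act_id_below.
have idx_odd_inj := interleave_idx_odd_inj u w N u_inj w_inj.
rewrite -(act_id_below _ _ _ _ ZN w_inj idx_odd_inj (fun j => idx_ge _)).
by rewrite (functional_extensionality _ _ (merged_id_below_odd u w N uw_agree)) act_id_below.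
Qed.

Lemma supported_on_act (Z : Ob C) N u : supported_on act Z (iota 0 N) ->
  injective u -> supported_on act (act u Z) (map u (iota 0 N)).
Proof.
move=> ZN u_inj v v_inj v_fix; rewrite -act_comp //.
apply: act_agree ZN (inj_comp v_inj u_inj) u_inj _ => i iN /=.
by apply/v_fix/map_f; rewrite mem_iota.
Qed.

Lemma in_supp_act (Z : Ob C) u a :
  injective u -> in_supp act (act u Z) a -> exists k, a = u k.
Proof.
move=> u_inj a_supp; have [N ZN] := supported_on_iota Z.
by have /mapP[k _ ->] := a_supp _ (supported_on_act Z N u ZN u_inj); exists k.
Qed.

Lemma not_in_suppP (Z : Ob C) a :
  ~ in_supp act Z a -> exists2 A, supported_on act Z A & a \notin A.
Proof.
move=> a_out; apply: NNPP => no_A; apply: a_out => A ZA.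
by apply: contraT => aA; exfalso; apply: no_A; exists A.
Qed.

Lemma in_supp_plus (Z Z' : Ob C) a : disj_supp act Z Z' ->
  in_supp act (plus Z Z') a -> in_supp act Z a \/ in_supp act Z' a.
Proof.
move=> disj a_supp; apply: NNPP.
case/not_or_and=> /not_in_suppP[A ZA aA] /not_in_suppP[A' ZA' aA'].
have sub_l : {subset A <= A ++ A'} by move=> b; rewrite mem_cat => ->.
have sub_r : {subset A' <= A ++ A'} by move=> b; rewrite mem_cat orbC => ->.
have ZZ' : supported_on act (plus Z Z') (A ++ A').
  move=> v v_inj v_fix; rewrite act_plus //.
  rewrite (supported_on_sub _ _ _ ZA sub_l v v_inj v_fix).
  by rewrite (supported_on_sub _ _ _ ZA' sub_r v v_inj v_fix).
by move: (a_supp _ ZZ'); rewrite mem_cat (negbTE aA) (negbTE aA').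
Qed.

End Support.

Section Sums.
Context {C : parsummable} {m : nat} (X : 'I_m -> Ob C).
Local Notation act := (@act C).
Local Notation comp := (@Defs.comp C).

Definition psum (u : 'I_m -> nat -> nat) (r : seq 'I_m) : Ob C :=
  \big[@plus C / zero C]_(i <- r) act (u i) (X i).

Definition pbr_sum (v u : 'I_m -> nat -> nat) (r : seq 'I_m) : Mor C :=
  \big[@plusm C / idm (zero C)]_(i <- r) br (v i) (u i) (X i).

Lemma inj2_inj (u : 'I_m -> nat -> nat) i : inj2 u -> injective (u i).
Proof. by move=> u_inj k k' /u_inj[]. Qed.

Lemma disj_supp_act_out (Y : Ob C) u (r : seq 'I_m) i : inj2 u -> i \notin r ->
  (forall b, in_supp act Y b -> exists j k, j \in r /\ b = u j k) ->
  disj_supp act (act (u i) (X i)) Y.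
Proof.
move=> u_inj ir Y_supp b [/(in_supp_act _ _ _ (inj2_inj u i u_inj))[k ->]].
by move=> /Y_supp[j [k' [jr /u_inj[eij _]]]]; move: ir; rewrite eij jr.
Qed.

Lemma in_supp_psum u r a : inj2 u -> uniq r ->
  in_supp act (psum u r) a -> exists i k, i \in r /\ a = u i k.
Proof.
move=> u_inj; elim: r a => [|i r IH] a /=; first by rewrite /psum big_nil => _ /supp_zero.
case/andP=> ir r_uniq; have ui_inj := inj2_inj u i u_inj.
have disj := disj_supp_act_out _ u r i u_inj ir (fun b => IH b r_uniq).
rewrite /psum big_cons => /(in_supp_plus _ _ _ disj)[].
  by case/(in_supp_act _ _ _ ui_inj) => k ->; exists i, k; rewrite mem_head.
by case/(IH _ r_uniq) => j [k [jr ->]]; exists j, k; rewrite in_cons jr orbT.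
Qed.

Lemma disj_supp_psum u r i : inj2 u -> uniq r -> i \notin r ->
  disj_supp act (act (u i) (X i)) (psum u r).
Proof.
by move=> u_inj r_uniq ir; apply: (disj_supp_act_out _ u r) => // b; apply: in_supp_psum.
Qed.

Lemma dom_cod_pbr_sum v u r : inj2 u -> inj2 v -> uniq r ->
  dom (pbr_sum v u r) = psum u r /\ cod (pbr_sum v u r) = psum v r.
Proof.
move=> u_inj v_inj; elim: r => [|i r IH] /=.
  by rewrite /pbr_sum /psum !big_nil dom_idm cod_idm.
case/andP=> ir r_uniq; have [dom_r cod_r] := IH r_uniq.
have ui_inj := inj2_inj u i u_inj; have vi_inj := inj2_inj v i v_inj.
rewrite /pbr_sum /psum !big_cons -/(pbr_sum v u r) -/(psum u r) -/(psum v r).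
have disj_dom : disj_supp act (dom (br (v i) (u i) (X i))) (dom (pbr_sum v u r)).
  by rewrite dom_br // dom_r; apply: disj_supp_psum.
have disj_cod : disj_supp act (cod (br (v i) (u i) (X i))) (cod (pbr_sum v u r)).
  by rewrite cod_br // cod_r; apply: disj_supp_psum.
by rewrite dom_plusm // cod_plusm // dom_br // cod_br // dom_r cod_r.
Qed.

Lemma pbr_sum_id u r : inj2 u -> uniq r -> pbr_sum u u r = idm (psum u r).
Proof.
move=> u_inj; elim: r => [|i r IH] /=; first by rewrite /pbr_sum /psum !big_nil.
case/andP=> ir r_uniq; rewrite /pbr_sum /psum !big_cons -/(pbr_sum u u r) -/(psum u r).
by rewrite IH // br_id ?plusm_idm //; [apply: disj_supp_psum | apply: inj2_inj].
Qed.

Lemma pbr_sum_comp w v u r : inj2 u -> inj2 v -> inj2 w -> uniq r ->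
  comp (pbr_sum w v r) (pbr_sum v u r) = pbr_sum w u r.
Proof.
move=> u_inj v_inj w_inj; elim: r => [|i r IH] /=.
  by rewrite /pbr_sum !big_nil -{1}(cod_idm (zero C)) comp_idl.
case/andP=> ir r_uniq.
have [dom_vu cod_vu] := dom_cod_pbr_sum v u r u_inj v_inj r_uniq.
have [dom_wv cod_wv] := dom_cod_pbr_sum w v r v_inj w_inj r_uniq.
have ui_inj := inj2_inj u i u_inj; have vi_inj := inj2_inj v i v_inj.
have wi_inj := inj2_inj w i w_inj.
rewrite /pbr_sum !big_cons -/(pbr_sum w v r) -/(pbr_sum v u r) -/(pbr_sum w u r).
rewrite -plusm_comp ?IH ?br_comp //.
- by rewrite cod_br // dom_br.
- by rewrite cod_vu dom_wv.
- by rewrite dom_br // dom_vu; apply: disj_supp_psum.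
- by rewrite cod_br // cod_vu; apply: disj_supp_psum.
- by rewrite cod_br // cod_wv; apply: disj_supp_psum.
Qed.

Lemma dom_cod_pbr v u : inj2 u -> inj2 v ->
  dom (pbr v u X) = pstar u X /\ cod (pbr v u X) = pstar v X.
Proof. by move=> u_inj v_inj; apply: dom_cod_pbr_sum; rewrite ?index_enum_uniq. Qed.

Lemma pbr_id u : inj2 u -> pbr u u X = idm (pstar u X).
Proof. by move=> u_inj; apply: pbr_sum_id; rewrite ?index_enum_uniq. Qed.

Lemma pbr_comp w v u : inj2 u -> inj2 v -> inj2 w ->
  comp (pbr w v X) (pbr v u X) = pbr w u X.
Proof. by move=> u_inj v_inj w_inj; apply: pbr_sum_comp; rewrite ?index_enum_uniq. Qed.

End Sums.

Section Transport.
Context {C : parsummable} {m n : nat} (X : 'I_m -> Ob C) (Y : 'I_n -> Ob C).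
Local Notation comp := (@Defs.comp C).
Implicit Types (phi : 'I_m -> nat -> nat) (psi : 'I_n -> nat -> nat).

Definition transport phi phi' psi psi' (f : Mor C) : Mor C :=
  comp (pbr psi' psi Y) (comp f (pbr phi phi' X)).

Section Maps.
Variables (phi phi' phi'' : 'I_m -> nat -> nat) (psi psi' psi'' : 'I_n -> nat -> nat).
Hypotheses (phi_inj : inj2 phi) (phi'_inj : inj2 phi') (phi''_inj : inj2 phi'').
Hypotheses (psi_inj : inj2 psi) (psi'_inj : inj2 psi') (psi''_inj : inj2 psi'').
Variable f : Mor C.
Hypotheses (dom_f : dom f = pstar phi X) (cod_f : cod f = pstar psi Y).

Lemma dom_cod_transport :
  dom (transport phi phi' psi psi' f) = pstar phi' X /\
  cod (transport phi phi' psi psi' f) = pstar psi' Y.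
Proof.
have [dom_X cod_X] := dom_cod_pbr X phi phi' phi'_inj phi_inj.
have [dom_Y cod_Y] := dom_cod_pbr Y psi' psi psi_inj psi'_inj.
have cod_fX : cod (comp f (pbr phi phi' X)) = cod f by rewrite cod_comp // cod_X dom_f.
rewrite /transport dom_comp ?cod_comp ?dom_comp ?cod_fX ?cod_f ?dom_Y ?cod_X ?dom_f //.
Qed.

Lemma transport_id : transport phi phi psi psi f = f.
Proof. by rewrite /transport !pbr_id // -dom_f -cod_f comp_idr comp_idl. Qed.

Lemma transport_comp :
  transport phi' phi'' psi' psi'' (transport phi phi' psi psi' f) =
  transport phi phi'' psi psi'' f.
Proof.
have [dom_X cod_X] := dom_cod_pbr X phi phi' phi'_inj phi_inj.
have [dom_X' cod_X'] := dom_cod_pbr X phi' phi'' phi''_inj phi'_inj.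
have [dom_Y cod_Y] := dom_cod_pbr Y psi' psi psi_inj psi'_inj.
have [dom_Y' cod_Y'] := dom_cod_pbr Y psi'' psi' psi'_inj psi''_inj.
rewrite /transport.
set bX := pbr phi phi' X; set bX' := pbr phi' phi'' X.
set bY := pbr psi' psi Y; set bY' := pbr psi'' psi' Y.
have cod_bX : cod bX = dom f by rewrite cod_X dom_f.
rewrite -(Defs.compA (g := comp f bX)) ?dom_comp ?cod_X' ?dom_X //; last first.
  by rewrite cod_comp // cod_f dom_Y.
rewrite -(Defs.compA (h := f)) ?cod_X' ?dom_X //.
rewrite (Defs.compA (h := bY')) ?cod_Y ?dom_Y' //; last first.
  by rewrite cod_comp ?cod_comp ?cod_f ?dom_Y ?cod_X' ?dom_X.
by rewrite /bX /bY /bX' /bY' !pbr_comp.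
Qed.

End Maps.
End Transport.

Lemma Hom_eq (C : parsummable) (A B : Ob C) (f g : Hom A B) : sval f = sval g -> f = g.
Proof. by apply: eq_sig_hprop => x; apply: proof_irrelevance. Qed.

Section Triples.
Context {C : parsummable} {m n : nat} {X : 'I_m -> Ob C} {Y : 'I_n -> Ob C}.
Implicit Types t : triple X Y.

Lemma tsimE t t' :
  tsim t t' = (sval (tf t') = transport X Y (tphi t) (tphi t') (tpsi t) (tpsi t') (sval (tf t))).
Proof. by []. Qed.

Lemma tsim_refl t : tsim t t.
Proof.
case: t => phi phi_inj psi psi_inj [f [dom_f cod_f]].
by rewrite tsimE transport_id.
Qed.

Lemma tsim_trans t t' t'' : tsim t t' -> tsim t' t'' -> tsim t t''.
Proof.
case: t t' t'' => [phi phi_inj psi psi_inj [f [dom_f cod_f]]]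
  [phi' phi'_inj psi' psi'_inj [f' f'_hom]] [phi'' phi''_inj psi'' psi''_inj [f'' f''_hom]].
by rewrite !tsimE /= => -> ->; rewrite transport_comp.
Qed.

Lemma tsim_sym t t' : tsim t t' -> tsim t' t.
Proof.
case: t t' => [phi phi_inj psi psi_inj [f [dom_f cod_f]]] [phi' phi'_inj psi' psi'_inj [f' f'_hom]].
by rewrite !tsimE /= => ->; rewrite transport_comp // transport_id.
Qed.

Lemma tclass_eq t t' : tsim t t' -> tclass t = tclass t'.
Proof.
move=> tt'; apply: functional_extensionality => s.
apply: propositional_extensionality; rewrite /tclass.
split=> [st | st']; first exact: tsim_trans _ _ _ st tt'.
exact: tsim_trans _ _ _ st' (tsim_sym _ _ tt').
Qed.

End Triples.

Theorem lemma2p2 (C : parsummable) (m n : nat)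
  (X : 'I_m -> Ob C) (Y : 'I_n -> Ob C)
  (phi : 'I_m -> nat -> nat) (psi : 'I_n -> nat -> nat)
  (hphi : inj2 phi) (hpsi : inj2 psi) :
  (forall f f' : @Hom C (pstar phi X) (pstar psi Y),
      to_Sigma hphi hpsi f = to_Sigma hphi hpsi f' -> f = f') /\
  (forall c : triple X Y -> Prop, Sigma c ->
      exists f : @Hom C (pstar phi X) (pstar psi Y), c = to_Sigma hphi hpsi f).
Proof.
split.
- move=> f f' same_class.
  have : tsim (Triple hphi hpsi f') (Triple hphi hpsi f).
    by rewrite -[tsim _ _]/(to_Sigma hphi hpsi f _) same_class; apply: tsim_refl.
  case: f f' {same_class} => [f hom_f] [f' [dom_f' cod_f']].
  by rewrite tsimE /= transport_id // => ff'; apply: Hom_eq.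
- move=> _ [[phi' phi'_inj psi' psi'_inj [f' [dom_f' cod_f']]] ->].
  pose f := transport X Y phi' phi psi' psi f'.
  have [dom_f cod_f] : dom f = pstar phi X /\ cod f = pstar psi Y.
    exact: dom_cod_transport.
  by exists (exist _ f (conj dom_f cod_f)); apply: tclass_eq.
Qed.
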